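(* Let $S\subseteq\mathbb N$ be a numerical semigroup, let $X$ be its set of nonzero Apéry elements, $q$ its depth, and $G=G(S)$ its associated graph. Let $n=|V(G)|$, $k=\mathrm{vm}(G)$ and $\nu=\nu(G)$. Then $$\tau(X)\ \ge\ \frac{k(q-1)+\nu}{2}+(n-k).$$
   Context: A numerical semigroup is a subset $S\subseteq\mathbb N$ containing $0$, closed under addition, with finite complement. Let $S^*=S\setminus\{0\}$, $m=\min S^*$, $c=\max(\mathbb Z\setminus S)+1$ (conductor). The depth is $q=\lceil c/m\rceil$ and $\rho=qm-c\in[0,m)$. For $x\in S$, $\delta(x)$ is the unique integer with $x+\delta(x)m\in[c,c+m-1]$; for finite $A\subseteq S$, $\tau(A)=\sum_{x\in A}\delta(x)$. The Apéry set is $\{s\in S: s-m\notin S\}$ and $X$ is this set minus $\{0\}$. The graph $G(S)$ has edge set consisting of all subsets $\{x,y\}\subseteq X$ (with $x=y$ allowed, giving a loop) such that $x+y\in X$, and vertex set $V(G)$ the set of all endvertices of these edges. A matching is a set of pairwise disjoint edges (loops allowed); $\mathrm{vm}(G)$ is the maximum number of vertices touched by a matching, and a vertex-maximal matching is one touching $\mathrm{vm}(G)$ vertices. An edge $\{x,y\}$ is weak if $\delta(x)+\delta(y)=q-1$ and normal if $\delta(x)+\delta(y)\ge q$ (every edge satisfies $\delta(x)+\delta(y)\ge q-1$). The normality number $\nu(G)$ is the maximum, over all vertex-maximal matchings $M$, of the number of vertices touched by the normal edges of $M$. *)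

From mathcomp Require Import all_boot all_order all_algebra.
Set Implicit Arguments. Unset Strict Implicit. Unset Printing Implicit Defensive.
Import Order.TTheory GRing.Theory Num.Theory.

Definition numerical_semigroup (S : pred nat) : Prop :=
  [/\ S 0,
      (forall x y, S x -> S y -> S (x + y)) &
      exists N, forall n, N <= n -> S n].

Definition is_multiplicity (S : pred nat) (m : nat) : Prop :=
  [/\ S m, 0 < m & forall s, S s -> 0 < s -> m <= s].

(* c = max (Z \ S) + 1, i.e. the least integer c with [c, oo) contained in S
   (negative integers are never in S, so c is a natural number). *)
Definition is_conductor (S : pred nat) (c : nat) : Prop :=
  (forall n, c <= n -> S n) /\
  (forall c', (forall n, c' <= n -> S n) -> c <= c').

(* depth q = ceil (c / m) *)
Definition depth (m c : nat) : nat := (c + m - 1) %/ m.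

(* delta(x): the unique integer d with x + d m in [c, c+m-1], i.e.
   d = floor((c + m - 1 - x) / m). *)
Definition delta (m c x : nat) : int :=
  ((c%:Z + m%:Z - 1 - x%:Z) %/ m%:Z)%Z.

(* Apery set with respect to m: s in S with s - m not in S (integers). *)
Definition apery (S : pred nat) (m s : nat) : bool :=
  S s && ((s < m) || ~~ S (s - m)).

Section Graph.
Variables (S : pred nat) (m c : nat).

(* Every Apery element is <= c + m - 1, so we index by 'I_(c+m). *)
Local Notation T := 'I_(c + m).

Definition Xset : {set T} := [set x : T | apery S m x & val x != 0].

Definition inX (s : nat) : bool := apery S m s && (s != 0).

(* edges of G(S): {x, y} subset X (x = y allowed) with x + y in X *)
Definition is_edge (e : {set T}) : bool :=
  [exists x : T, exists y : T,
     [&& x \in Xset, y \in Xset, e == [set x; y] & inX (val x + val y)]].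

Definition Vset : {set T} := [set v : T | [exists e : {set T}, is_edge e && (v \in e)]].

Definition is_matching (M : {set {set T}}) : bool :=
  [forall e in M, is_edge e] &&
  [forall e in M, forall f in M, (e != f) ==> [disjoint e & f]].

Definition touched (M : {set {set T}}) : nat := #|cover M|.

Definition vm : nat := \max_(M : {set {set T}} | is_matching M) touched M.

Definition is_normal (e : {set T}) : bool :=
  [exists x : T, exists y : T,
     (e == [set x; y]) && ((depth m c)%:Z <= delta m c x + delta m c y)%R].

Definition normal_part (M : {set {set T}}) : {set {set T}} :=
  [set e in M | is_normal e].

Definition nu : nat :=
  \max_(M : {set {set T}} | is_matching M && (touched M == vm))
     touched (normal_part M).

Definition tau_X : int := (\sum_(x in Xset) delta m c x)%R.

End Graph.

From Pilot Require Import Defs.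
From mathcomp Require Import all_boot all_order all_algebra.
From mathcomp Require Import zify lra.

(* For an edge {x, y} of G(S) the sum x + y is an Apery element, hence
   x + y < c + m, which forces delta x + delta y >= q - 1, and >= q on normal
   edges.  Summing over a vertex-maximal matching M realising nu, the k
   vertices it covers contribute at least (k (q - 1) + nu) / 2 to tau(X).
   Each of the n - k remaining vertices of G is an endpoint of some edge whose
   other endpoint is >= m, so it lies below c and has delta >= 1; the rest of
   X has delta >= 0. *)
Set Implicit Arguments. Unset Strict Implicit. Unset Printing Implicit Defensive.
Import Order.TTheory GRing.Theory Num.Theory.
Local Open Scope ring_scope.

Section DeltaArithmetic.
Variables m c : nat.
Hypothesis m_gt0 : (0 < m)%N.

Local Notation q := (depth m c).
Local Notation delta := (delta m c).

Lemma depth_spec : (c <= q * m < c + m)%N.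
Proof.
rewrite /depth; have := leq_divM (c + m - 1) m.
by have := ltn_ceil (c + m - 1) m_gt0; lia.
Qed.

Lemma delta_spec x : c%:Z <= x%:Z + delta x * m%:Z < c%:Z + m%:Z.
Proof.
have m_gt0z : 0 < m%:Z by rewrite ltz_nat.
have := lez_floor (c%:Z + m%:Z - 1 - x%:Z) (lt0r_neq0 m_gt0z).
have := ltz_ceil (c%:Z + m%:Z - 1 - x%:Z) m_gt0z.
rewrite /Defs.delta; lia.
Qed.

Lemma delta_ge0 x : (x < c + m)%N -> 0 <= delta x.
Proof. have := delta_spec x; nia. Qed.

Lemma delta_ge1 x : (x < c)%N -> 1 <= delta x.
Proof. have := delta_spec x; nia. Qed.

Lemma delta_add_ge x y : (x + y < c + m)%N -> q%:Z - 1 <= delta x + delta y.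
Proof. have := depth_spec; have := delta_spec x; have := delta_spec y; nia. Qed.

End DeltaArithmetic.

Lemma sum_set2_double (T : finType) (V : nmodType) (f : T -> V) x y :
  (\sum_(v in [set x; y]) f v) *+ 2 = (f x + f y) *+ #|[set x; y]|.
Proof.
have [<-|nxy] := eqVneq x y; first by rewrite setUid cards1 big_set1 mulr2n.
by rewrite cards2 nxy big_setU1 ?big_set1 ?in_set1.
Qed.

Lemma ler_sum_set2 (T : finType) (R : numDomainType) (f : T -> R) x y b :
  b <= f x + f y -> b *+ #|[set x; y]| <= (\sum_(v in [set x; y]) f v) *+ 2.
Proof. by move=> le_b; rewrite sum_set2_double lerMn2r le_b orbT. Qed.

Section Graph.
Variables (S : pred nat) (m c : nat).
Hypotheses (multS : is_multiplicity S m) (condS : is_conductor S c).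

Local Notation T := 'I_(c + m).
Local Notation q := (depth m c).
Local Notation delta := (delta m c).
Local Notation X := (Xset S m c).
Local Notation V := (Vset S m c).
Implicit Types (M : {set {set T}}) (e : {set T}).

Let m_gt0 : (0 < m)%N. Proof. by case: multS. Qed.

Lemma apery_lt_conductorD s : apery S m s -> (s < c + m)%N.
Proof.
case: condS => S_ge_c _ /andP[_ /orP[//|]]; first by move=> s_lt; lia.
by apply: contraR; rewrite -leqNgt => le_s; apply: S_ge_c; lia.
Qed.

Lemma Xset_ge_mult x : x \in X -> (m <= x)%N.
Proof.
case: multS => _ _ m_min; rewrite inE => /andP[/andP[Sx _] x_neq0].
by apply: m_min; rewrite // lt0n.
Qed.

Lemma edgeP e : is_edge S e ->
  exists x y : T, [/\ x \in X, y \in X, e = [set x; y] & inX S m (x + y)].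
Proof. by move=> /existsP[x /existsP[y /and4P[Xx Xy /eqP-> Xxy]]]; exists x, y. Qed.

Lemma Vset_subset_Xset : V \subset X.
Proof.
apply/subsetP => v; rewrite inE => /existsP[e /andP[/edgeP[x [y [Xx Xy -> _]]]]].
by case/set2P=> ->.
Qed.

Lemma Vset_lt_conductor v : v \in V -> (v < c)%N.
Proof.
rewrite inE => /existsP[e /andP[/edgeP[x [y [Xx Xy -> /andP[Axy _]]]] v_xy]].
have := apery_lt_conductorD Axy; have := Xset_ge_mult Xx; have := Xset_ge_mult Xy.
by case/set2P: v_xy => ->; lia.
Qed.

Lemma delta_Xset_ge0 x : x \in X -> 0 <= delta x.
Proof. by rewrite inE => /andP[/apery_lt_conductorD/(delta_ge0 m_gt0)]. Qed.

Lemma delta_Vset_ge1 v : v \in V -> 1 <= delta v.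
Proof. by move/Vset_lt_conductor/(delta_ge1 m_gt0). Qed.

Lemma edge_weight_ge e : is_edge S e ->
  (q%:Z - 1) *+ #|e| <= (\sum_(v in e) delta v) *+ 2.
Proof.
case/edgeP=> x [y [_ _ -> /andP[Axy _]]].
exact/ler_sum_set2/(delta_add_ge m_gt0)/apery_lt_conductorD.
Qed.

Lemma normal_weight_ge e : is_normal e ->
  q%:Z *+ #|e| <= (\sum_(v in e) delta v) *+ 2.
Proof. by case/existsP=> x /existsP[y /andP[/eqP-> q_le]]; apply: ler_sum_set2. Qed.

Lemma edge_weight_normal_ge e : is_edge S e ->
  (q%:Z - 1) *+ #|e| + (if is_normal e then #|e|%:Z else 0)
    <= (\sum_(v in e) delta v) *+ 2.
Proof.
case: ifP => [/normal_weight_ge + _ | _ /edge_weight_ge]; last by rewrite addr0.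
by rewrite -[#|e|%:Z]natz -mulrnDl subrK.
Qed.

Lemma matching_edge M e : is_matching S M -> e \in M -> is_edge S e.
Proof. by case/andP=> /forall_inP edgeM _ /edgeM. Qed.

Lemma matching_trivIset M : is_matching S M -> trivIset M.
Proof.
case/andP=> _ /forall_inP disjM; apply/trivIsetP=> e f Me Mf.
exact: (implyP (forall_inP (disjM e Me) f Mf)).
Qed.

Lemma cover_matching_subset M : is_matching S M -> cover M \subset V.
Proof.
move=> matM; apply/subsetP=> v /bigcupP[e Me ev]; rewrite inE.
by apply/existsP; exists e; rewrite (matching_edge matM Me).
Qed.

Lemma matching_cover_weight M : is_matching S M ->
  (q%:Z - 1) *+ touched M + (touched (normal_part M))%:Z
    <= (\sum_(v in cover M) delta v) *+ 2.
Proof.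
move=> matM; have trivM := matching_trivIset matM.
have trivN : trivIset (normal_part M).
  by apply: trivIsetS trivM; apply/subsetP=> e; rewrite inE => /andP[].
have -> : (touched (normal_part M))%:Z
    = \sum_(e in M) (if is_normal e then #|e|%:Z else 0).
  rewrite /touched -(eqP trivN) -natz natr_sum big_set /= -big_mkcondr.
  by apply: eq_bigr => e _; rewrite natz.
rewrite /touched -(eqP trivM) big_trivIset // -sumrMnl -sumrMnr -big_split /=.
by apply: ler_sum => e /(matching_edge matM)/edge_weight_normal_ge.
Qed.

Lemma tau_X_ge_cover M : is_matching S M ->
  \sum_(v in cover M) delta v + (#|V|%:Z - (touched M)%:Z) <= tau_X S m c.
Proof.
move=> /cover_matching_subset coverV.
have -> : #|V|%:Z - (touched M)%:Z = #|V :\: cover M|%:Z.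
  by rewrite cardsD (setIidPr coverV) subzn // subset_leq_card.
have tau_ge_V : \sum_(v in V) delta v <= tau_X S m c.
  rewrite /tau_X [X in _ <= X](big_setID V) /= (setIidPr Vset_subset_Xset) lerDl.
  by apply: sumr_ge0 => x /setDP[/delta_Xset_ge0].
apply: le_trans tau_ge_V.
rewrite [X in _ <= X](big_setID (cover M)) /= (setIidPr coverV) lerD2l.
by rewrite -natz -sumr_const; apply: ler_sum => v /setDP[/delta_Vset_ge1].
Qed.

Lemma tau_X_matching_ge M : is_matching S M ->
  (touched M)%:Z * (q%:Z - 1) + (touched (normal_part M))%:Z
    + 2 * (#|V|%:Z - (touched M)%:Z) <= 2 * tau_X S m c.
Proof.
move=> matM; have := matching_cover_weight matM; have := tau_X_ge_cover matM.
rewrite !pmulrn !mulrzz.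
move: (q%:Z - 1) (\sum_(v in _) _) (tau_X S m c) => d w t; nia.
Qed.

End Graph.

Lemma nu_attained (S : pred nat) (m c : nat) :
  exists M : {set {set 'I_(c + m)}},
    [/\ is_matching S M, touched M = vm S m c & touched (normal_part M) = nu S m c].
Proof.
have [|M0 matM0 vmE] := eq_bigmax_cond (@touched m c) (A := @is_matching S m c).
  apply/card_gt0P; exists set0.
  by apply/andP; split; apply/forall_inP => e; rewrite inE.
have [|M1 /andP[matM1 /eqP touchedM1] nuE] :=
  eq_bigmax_cond (@touched m c \o @normal_part m c)
    (A := fun M => is_matching S M && (touched M == vm S m c)).
  apply/card_gt0P; exists M0; apply/andP.
  by split; [exact: matM0 | apply/eqP; exact: esym vmE].
by exists M1.
Qed.

Lemma ler_halfD_intr (R : realFieldType) (a b t : int) :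
  a + 2 * b <= 2 * t -> a%:~R / 2%:R + b%:~R <= t%:~R :> R.
Proof.
rewrite -(ler_int R) intrD !intrM.
have -> : 2%:~R = 2%:R :> R by [].
lra.
Qed.

Theorem theorem3p24 (S : pred nat) (m c : nat) :
  numerical_semigroup S -> is_multiplicity S m -> is_conductor S c ->
  let q := depth m c in
  let n := #|Vset S m c| in
  let k := vm S m c in
  let nuG := nu S m c in
  (((k%:Z * (q%:Z - 1) + nuG%:Z)%:~R / 2%:R + (n%:Z - k%:Z)%:~R : rat)
     <= (tau_X S m c)%:~R)%R.
Proof.
move=> _ multS condS /=.
have [M [matM <- <-]] := nu_attained S m c.
exact/ler_halfD_intr/tau_X_matching_ge.
Qed.
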